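(* Let $P \subseteq \mathbb{R}^d$ be a full-dimensional polytope and let $s_0 > 0$ be a discontinuity point of $L_P$. If $s_0$ is a left-discontinuity, then $L_P(s_0) - \lim_{s \to s_0^-} L_P(s)$ equals the number of integer points contained in the union of the front facets of $s_0 P$. If $s_0$ is a right-discontinuity, then $L_P(s_0) - \lim_{s \to s_0^+} L_P(s)$ equals the number of integer points contained in the union of the back facets of $s_0 P$.
   Context: For a polytope $P \subseteq \mathbb{R}^d$ and real $s \ge 0$, $L_P(s) = \#(sP \cap \mathbb{Z}^d)$, where $sP = \{sx : x \in P\}$. Write a full-dimensional polytope as $P = \bigcap_{i=1}^n \{x : \langle a_i, x\rangle \le b_i\}$ where $F_i = P \cap \{x : \langle a_i, x\rangle = b_i\}$, $i=1,\dots,n$, are exactly the facets of $P$. The facet $F_i$ is a front facet if $b_i > 0$ and a back facet if $b_i < 0$ (facets with $b_i=0$ are neither). For $s_0>0$, the front (resp. back) facets of $s_0P$ are the sets $s_0F_i$ with $F_i$ a front (resp. back) facet of $P$. *)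

From Stdlib Require Import Reals Lra Lia ZArith List Classical ClassicalEpsilon.
Import ListNotations.
Open Scope R_scope.

(* Points of R^d are functions nat -> R; only coordinates j < d matter. *)
Fixpoint dot (d : nat) (a x : nat -> R) : R :=
  match d with
  | O => 0
  | S k => dot k a x + a k * x k
  end.

Fixpoint lincomb (k : nat) (c : nat -> R) (v : nat -> nat -> R) (j : nat) : R :=
  match k with
  | O => 0
  | S m => lincomb m c v j + c m * v m j
  end.

Definition lin_indep (d k : nat) (v : nat -> nat -> R) : Prop :=
  forall c : nat -> R,
    (forall j, (j < d)%nat -> lincomb k c v j = 0) ->
    forall i, (i < k)%nat -> c i = 0.

(* S contains k+1 affinely independent points, i.e. dim aff S >= k *)
Definition affdim_ge (d : nat) (S : (nat -> R) -> Prop) (k : nat) : Prop :=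
  exists p : nat -> nat -> R,
    (forall i, (i <= k)%nat -> S (p i)) /\
    lin_indep d k (fun i j => p (Datatypes.S i) j - p O j).

Definition affdim_eq (d : nat) (S : (nat -> R) -> Prop) (k : nat) : Prop :=
  affdim_ge d S k /\ ~ affdim_ge d S (Datatypes.S k).

Definition hpoly (d n : nat) (a : nat -> nat -> R) (b : nat -> R) (x : nat -> R) : Prop :=
  forall i, (i < n)%nat -> dot d (a i) x <= b i.

Definition bounded_in (d : nat) (S : (nat -> R) -> Prop) : Prop :=
  exists M, forall x, S x -> forall j, (j < d)%nat -> Rabs (x j) <= M.

Definition full_dimensional (d : nat) (S : (nat -> R) -> Prop) : Prop :=
  affdim_ge d S d.

Definition is_face (d : nat) (P F : (nat -> R) -> Prop) : Prop :=
  exists (c : nat -> R) (delta : R),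
    (forall x, P x -> dot d c x <= delta) /\
    (forall x, F x <-> (P x /\ dot d c x = delta)).

Definition is_facet (d : nat) (P F : (nat -> R) -> Prop) : Prop :=
  is_face d P F /\ affdim_eq d F (d - 1).

Definition hfacet (d n : nat) (a : nat -> nat -> R) (b : nat -> R) (i : nat)
  (x : nat -> R) : Prop :=
  hpoly d n a b x /\ dot d (a i) x = b i.

Definition dilate (d : nat) (s : R) (S : (nat -> R) -> Prop) (x : nat -> R) : Prop :=
  exists y, S y /\ forall j, (j < d)%nat -> x j = s * y j.

(* integer point z in Z^d (list of length d), viewed in R^d *)
Definition zpt (z : list Z) : nat -> R := fun j => IZR (nth j z 0%Z).

(* cardinality of a finite set of lists (0 if infinite) *)
Definition card (S : list Z -> Prop) : nat :=
  match excluded_middle_informative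
          (exists l : list (list Z), NoDup l /\ forall z, In z l <-> S z) with
  | left H => length (proj1_sig (constructive_indefinite_description _ H))
  | right _ => O
  end.

Definition nlattice (d : nat) (S : (nat -> R) -> Prop) : nat :=
  card (fun z => length z = d /\ S (zpt z)).

Definition LP (d : nat) (P : (nat -> R) -> Prop) (s : R) : R :=
  INR (nlattice d (dilate d s P)).

(** For an integer point z and a constraint <a_i, z> <= s b_i, moving s slightly
    away from s0 keeps every strict inequality and every violated inequality as
    it is; an equality <a_i, z> = s0 b_i survives exactly when (s - s0) b_i >= 0,
    i.e. for s < s0 it breaks iff b_i > 0 and for s > s0 iff b_i < 0.  Since P is
    bounded, only the finitely many integer points of a fixed box matter, so on a
    one-sided neighbourhood of s0 the lattice points of sP are exactly those of
    s0P off the front (resp. back) facets, and L_P is constant there. *)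

From Stdlib Require Import Reals Lra Lia ZArith Bool List Classical ClassicalEpsilon
  FunctionalExtensionality PropExtensionality.
Import ListNotations.
Open Scope R_scope.

Definition near (s0 : R) (D : R -> Prop) (P : R -> Prop) : Prop :=
  exists dl, 0 < dl /\ forall s, D s -> Rabs (s - s0) < dl -> P s.

Section Near.

Variables (s0 : R) (D : R -> Prop).

Lemma near_ball e : 0 < e -> near s0 D (fun s => Rabs (s - s0) < e).
Proof. intros He; exists e; split; auto. Qed.

Lemma near_mono (P Q : R -> Prop) :
  (forall s, D s -> P s -> Q s) -> near s0 D P -> near s0 D Q.
Proof. intros HPQ [dl [Hdl HP]]; exists dl; split; auto. Qed.

Lemma near_and (P Q : R -> Prop) :
  near s0 D P -> near s0 D Q -> near s0 D (fun s => P s /\ Q s).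
Proof.
  intros [d1 [Hd1 HP]] [d2 [Hd2 HQ]]; exists (Rmin d1 d2); split.
  - now apply Rmin_case.
  - intros s Ds Hs; split.
    + apply HP; auto; generalize (Rmin_l d1 d2); lra.
    + apply HQ; auto; generalize (Rmin_r d1 d2); lra.
Qed.

Lemma near_forall_list {A : Type} (l : list A) (P : A -> R -> Prop) :
  (forall x, In x l -> near s0 D (P x)) ->
  near s0 D (fun s => forall x, In x l -> P x s).
Proof.
  induction l as [|y l IH]; intros H.
  - exists 1; split; [lra|]; intros s _ _ x [].
  - apply (near_mono (fun s => P y s /\ forall x, In x l -> P x s)).
    + intros s _ [Hy Hl] x [<-|Hx]; auto.
    + apply near_and; [apply H; now left|].
      apply IH; intros x Hx; apply H; now right.
Qed.

Lemma limit1_in_near (f : R -> R) (l : R) :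
  near s0 D (fun s => f s = l) -> limit1_in f D l s0.
Proof.
  intros [dl [Hdl H]] eps Heps; exists dl; split; [lra|].
  intros s [Ds Hs]; simpl in *; unfold R_dist in *.
  rewrite H, Rminus_diag, Rabs_R0; auto.
Qed.

Lemma near_pos_le_twice : 0 < s0 -> near s0 D (fun s => 0 < s /\ s <= 2 * s0).
Proof.
  intros Hs0; apply (near_mono (fun s => Rabs (s - s0) < s0)); [|now apply near_ball].
  intros s _; unfold Rabs; destruct Rcase_abs; lra.
Qed.

Lemma near_mult_close (b e : R) :
  0 < e -> near s0 D (fun s => Rabs (s * b - s0 * b) < e).
Proof.
  intros He; pose proof (Rabs_pos b) as Hb.
  apply (near_mono (fun s => Rabs (s - s0) < e / (Rabs b + 1))).
  2:{ apply near_ball, Rdiv_lt_0_compat; lra. }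
  intros s _ Hs.
  replace (s * b - s0 * b) with ((s - s0) * b) by ring; rewrite Rabs_mult.
  apply Rmult_lt_compat_r with (r := Rabs b + 1) in Hs; [|lra].
  unfold Rdiv in Hs; rewrite Rmult_assoc, Rinv_l, Rmult_1_r in Hs by lra.
  generalize (Rabs_pos (s - s0)); nra.
Qed.

Lemma near_le_mult (c b : R) :
  near s0 D (fun s => c <= s * b <-> c < s0 * b \/ (c = s0 * b /\ s0 * b <= s * b)).
Proof.
  destruct (total_order_T c (s0 * b)) as [[Hlt|Heq]|Hgt].
  - apply (near_mono (fun s => Rabs (s * b - s0 * b) < s0 * b - c));
      [|apply near_mult_close; lra].
    intros s _; unfold Rabs; destruct Rcase_abs; intros; split; intros; lra.
  - apply (near_mono (fun _ => True)); [|exists 1; split; auto; lra].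
    intros s _ _; split; [intros; right; split; lra|intros [H|[_ H]]; lra].
  - apply (near_mono (fun s => Rabs (s * b - s0 * b) < c - s0 * b));
      [|apply near_mult_close; lra].
    intros s _; unfold Rabs; destruct Rcase_abs; intros; split; intros; lra.
Qed.

End Near.

Lemma dot_ext d c x y :
  (forall j, (j < d)%nat -> x j = y j) -> dot d c x = dot d c y.
Proof.
  induction d as [|d IH]; simpl; intros H; [reflexivity|].
  rewrite IH by (intros; apply H; lia); rewrite H by lia; reflexivity.
Qed.

Lemma dot_scale d c x k : dot d c (fun j => k * x j) = k * dot d c x.
Proof. induction d as [|d IH]; simpl; [ring|]; rewrite IH; ring. Qed.

Lemma dot_dilate d c s y x :
  (forall j, (j < d)%nat -> x j = s * y j) -> dot d c x = s * dot d c y.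
Proof. intros Hx; rewrite (dot_ext d c x (fun j => s * y j)) by exact Hx; apply dot_scale. Qed.

Lemma dot_undilate d c s x : 0 < s -> s * dot d c (fun j => / s * x j) = dot d c x.
Proof. intros Hs; rewrite dot_scale; field; lra. Qed.

Lemma dilate_hpoly_iff d n a b s x : 0 < s ->
  dilate d s (hpoly d n a b) x <-> forall i, (i < n)%nat -> dot d (a i) x <= s * b i.
Proof.
  intros Hs; split.
  - intros [y [Hy Hx]] i Hi; rewrite (dot_dilate d _ s y x Hx).
    apply Rmult_le_compat_l; [lra|]; now apply Hy.
  - intros H; exists (fun j => / s * x j); split.
    + intros i Hi; apply (Rmult_le_reg_l s); [lra|].
      rewrite dot_undilate; auto.
    + intros j _; field; lra.
Qed.

Lemma dilate_hfacet_iff d n a b s i x : 0 < s ->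
  dilate d s (hfacet d n a b i) x <->
  dilate d s (hpoly d n a b) x /\ dot d (a i) x = s * b i.
Proof.
  intros Hs; split.
  - intros [y [[Hy Hyi] Hx]]; split; [now exists y|].
    now rewrite (dot_dilate d _ s y x Hx), Hyi.
  - intros [[y [Hy Hx]] Hi]; exists y; split; [split|]; auto.
    apply (Rmult_eq_reg_l s); [|lra].
    now rewrite <- (dot_dilate d _ s y x Hx).
Qed.

Lemma dilate_bounded d P : bounded_in d P ->
  exists M, forall s x, 0 < s -> dilate d s P x ->
    forall j, (j < d)%nat -> Rabs (x j) <= s * M.
Proof.
  intros [M HM]; exists (Rmax M 0); intros s x Hs [y [Hy Hx]] j Hj.
  rewrite Hx, Rabs_mult, Rabs_pos_eq by (auto; lra).
  apply Rmult_le_compat_l; [lra|].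
  generalize (HM y Hy j Hj) (Rmax_l M 0); lra.
Qed.

Lemma lattice_box d r : exists B : list (list Z),
  NoDup B /\ forall z, length z = d ->
    (forall j, (j < d)%nat -> Rabs (zpt z j) <= r) -> In z B.
Proof.
  destruct (INR_unbounded r) as [K HK]; rewrite INR_IZR_INZ in HK.
  set (ks := map (fun i => (Z.of_nat i - Z.of_nat K)%Z) (seq 0 (2 * K + 1))).
  assert (Hks : forall k, Rabs (IZR k) <= r -> In k ks).
  { intros k Hk; apply in_map_iff; exists (Z.to_nat (k + Z.of_nat K)).
    assert (Hk' : (- Z.of_nat K <= k <= Z.of_nat K)%Z).
    { revert Hk; unfold Rabs; destruct Rcase_abs; intros;
        split; apply le_IZR; rewrite ?opp_IZR; lra. }
    split; [rewrite Z2Nat.id; lia|apply in_seq; lia]. }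
  enough (HB : exists B, forall z, length z = d ->
    (forall j, (j < d)%nat -> Rabs (zpt z j) <= r) -> In z B).
  { destruct HB as [B HB]; exists (nodup (list_eq_dec Z.eq_dec) B).
    split; [apply NoDup_nodup|]; intros; rewrite nodup_In; auto. }
  induction d as [|d [B IH]].
  - exists [nil]; intros [|k z] Hz _; [now left|discriminate].
  - exists (flat_map (fun k => map (cons k) B) ks).
    intros [|k z] Hz Hr; [discriminate|]; apply in_flat_map; exists k; split.
    + apply Hks, (Hr 0%nat); lia.
    + apply in_map, IH; [simpl in Hz; lia|].
      intros j Hj; apply (Hr (S j)); lia.
Qed.

Definition bool_of (P : Prop) : bool :=
  if excluded_middle_informative P then true else false.

Lemma bool_ofP P : bool_of P = true <-> P.
Proof. unfold bool_of; destruct excluded_middle_informative; split; auto; discriminate. Qed.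

Lemma card_ext (Q1 Q2 : list Z -> Prop) :
  (forall z, Q1 z <-> Q2 z) -> card Q1 = card Q2.
Proof.
  intros H; f_equal; apply functional_extensionality; intros z.
  now apply propositional_extensionality.
Qed.

Lemma card_filter (B : list (list Z)) (Q : list Z -> Prop) :
  NoDup B -> (forall z, Q z -> In z B) ->
  card Q = length (filter (fun z => bool_of (Q z)) B).
Proof.
  intros HB HQ; unfold card; destruct excluded_middle_informative as [Hex|Hnex].
  - destruct (constructive_indefinite_description _ Hex) as [l [Hl HlQ]]; simpl.
    apply Nat.le_antisymm; apply NoDup_incl_length; auto using NoDup_filter;
      intros z Hz; rewrite filter_In, bool_ofP in *.
    + rewrite HlQ in Hz; auto.
    + now apply HlQ.
  - exfalso; apply Hnex; exists (filter (fun z => bool_of (Q z)) B).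
    split; [now apply NoDup_filter|].
    intros z; rewrite filter_In, bool_ofP; intuition.
Qed.

Lemma length_filter_split {A : Type} (f g : A -> bool) (l : list A) :
  length (filter f l) =
  (length (filter (fun x => andb (f x) (negb (g x))) l) +
   length (filter (fun x => andb (f x) (g x)) l))%nat.
Proof.
  induction l as [|x l IH]; simpl; auto.
  destruct (f x), (g x); simpl; rewrite IH; lia.
Qed.

Lemma card_split (B : list (list Z)) (A G : list Z -> Prop) :
  NoDup B -> (forall z, A z -> In z B) ->
  card A = (card (fun z => A z /\ ~ G z) + card (fun z => A z /\ G z))%nat.
Proof.
  intros HB HA.
  rewrite !(card_filter B) by (auto; intros z Hz; apply HA, Hz).
  rewrite (length_filter_split _ (fun z => bool_of (G z))).
  f_equal; f_equal; apply filter_ext; intros z;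
    apply eq_true_iff_eq; rewrite andb_true_iff, ?negb_true_iff, !bool_ofP;
    [|tauto].
  rewrite <- not_true_iff_false, bool_ofP; tauto.
Qed.

Lemma forall_le_perturb_iff (n : nat) (c t t0 : nat -> R) (E : nat -> Prop) :
  (forall i, (i < n)%nat -> (c i <= t i <-> c i < t0 i \/ (c i = t0 i /\ ~ E i))) ->
  (forall i, (i < n)%nat -> c i <= t i) <->
  (forall i, (i < n)%nat -> c i <= t0 i) /\ ~ (exists i, (i < n)%nat /\ E i /\ c i = t0 i).
Proof.
  intros H; split.
  - intros Ht; split.
    + intros i Hi; destruct (proj1 (H i Hi) (Ht i Hi)) as [|[]]; lra.
    + intros [i [Hi [HE Heq]]]; destruct (proj1 (H i Hi) (Ht i Hi)) as [|[]]; auto; lra.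
  - intros [Ht0 HE] i Hi; apply H; auto.
    destruct (Rle_lt_or_eq_dec _ _ (Ht0 i Hi)); [now left|right; split; auto].
    intros Hi'; apply HE; now exists i.
Qed.

Lemma dilate_lattice_finite d (P : (nat -> R) -> Prop) smax : bounded_in d P ->
  exists B : list (list Z), NoDup B /\
    forall s z, 0 < s -> s <= smax -> length z = d -> dilate d s P (zpt z) -> In z B.
Proof.
  intros Hbd; destruct (dilate_bounded _ _ Hbd) as [M HM].
  destruct (lattice_box d (smax * M)) as [B [HB HzB]].
  exists B; split; auto; intros s z Hs Hs2 Hz Hx; apply HzB; auto; intros j Hj.
  apply (Rle_trans _ (s * M)); [now apply HM|].
  assert (0 <= M) by (generalize (HM s _ Hs Hx j Hj) (Rabs_pos (zpt z j)); nra).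
  nra.
Qed.

Section OneSided.

Variables (d n : nat) (a : nat -> nat -> R) (b : nat -> R) (s0 : R).
Variables (D : R -> Prop) (side : R -> Prop).
Hypothesis Hbd : bounded_in d (hpoly d n a b).
Hypothesis Hs0 : 0 < s0.
Hypothesis Hside : forall bi s, D s -> (s0 * bi <= s * bi <-> ~ side bi).

Let P := hpoly d n a b.
Let A0 (z : list Z) := length z = d /\ dilate d s0 P (zpt z).
Let G (z : list Z) :=
  exists i, (i < n)%nat /\ side (b i) /\ dot d (a i) (zpt z) = s0 * b i.

Lemma near_dilate_lattice_iff :
  near s0 D (fun s => forall z, length z = d /\ dilate d s P (zpt z) <-> A0 z /\ ~ G z).
Proof.
  destruct (dilate_lattice_finite d P (2 * s0) Hbd) as [B [_ HinB]].
  assert (Hnear := near_and s0 D _ _ (near_pos_le_twice s0 D Hs0)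
    (near_forall_list s0 D B _ (fun z _ => near_forall_list s0 D (seq 0 n) _
       (fun i _ => near_le_mult s0 D (dot d (a i) (zpt z)) (b i))))).
  revert Hnear; apply near_mono; intros s Ds [[Hs Hs2] Hperturb] z.
  destruct (classic (length z = d /\ In z B)) as [[Hz HzB]|Hz].
  - unfold A0, G, P; rewrite !dilate_hpoly_iff by auto.
    rewrite (forall_le_perturb_iff n (fun i => dot d (a i) (zpt z)) (fun i => s * b i)
               (fun i => s0 * b i) (fun i => side (b i))); [tauto|].
    intros i Hi; rewrite (Hperturb z HzB i) by (apply in_seq; lia).
    rewrite Hside by auto; tauto.
  - split; [intros [Hl Hx]|intros [[Hl Hx] _]]; exfalso; apply Hz;
      split; eauto; apply (HinB s0); auto; lra.
Qed.

Lemma LP_one_sided_limit :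
  limit1_in (LP d P) D
    (LP d P s0 - INR (nlattice d (fun x => exists i, (i < n)%nat /\ side (b i) /\
                                              dilate d s0 (hfacet d n a b i) x))) s0.
Proof.
  destruct (dilate_lattice_finite d P s0 Hbd) as [B [HB HinB]].
  assert (Hfacets : forall z, (length z = d /\ exists i, (i < n)%nat /\ side (b i) /\
                                 dilate d s0 (hfacet d n a b i) (zpt z)) <-> A0 z /\ G z).
  { intros z; unfold A0, G; split.
    - intros [Hl [i [Hi [Hsd Hf]]]]; apply dilate_hfacet_iff in Hf as [Hf Hfi]; auto.
      split; [auto|]; exists i; auto.
    - intros [[Hl Hx] [i [Hi [Hsd Hfi]]]]; split; auto; exists i.
      repeat split; auto; apply dilate_hfacet_iff; auto. }
  apply limit1_in_near; eapply near_mono; [|exact near_dilate_lattice_iff].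
  intros s _ Hpts; unfold LP, nlattice.
  rewrite (card_ext _ _ Hpts), (card_ext _ _ Hfacets).
  fold (A0 : list Z -> Prop).
  rewrite (card_split B A0 G HB) by (intros z [Hl Hx]; apply (HinB s0); auto; lra).
  rewrite plus_INR; ring.
Qed.

End OneSided.

Theorem lemma3p1 (d n : nat) (a : nat -> nat -> R) (b : nat -> R) (s0 : R) :
  bounded_in d (hpoly d n a b) ->
  full_dimensional d (hpoly d n a b) ->
  (forall i, (i < n)%nat -> is_facet d (hpoly d n a b) (hfacet d n a b i)) ->
  (forall G, is_facet d (hpoly d n a b) G ->
     exists i, (i < n)%nat /\ forall x, G x <-> hfacet d n a b i x) ->
  0 < s0 ->
  (~ limit1_in (LP d (hpoly d n a b)) (fun s => 0 <= s /\ s < s0)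
       (LP d (hpoly d n a b) s0) s0 ->
   limit1_in (LP d (hpoly d n a b)) (fun s => 0 <= s /\ s < s0)
     (LP d (hpoly d n a b) s0 -
      INR (nlattice d (fun x => exists i, (i < n)%nat /\ 0 < b i /\
                                   dilate d s0 (hfacet d n a b i) x))) s0) /\
  (~ limit1_in (LP d (hpoly d n a b)) (fun s => s0 < s)
       (LP d (hpoly d n a b) s0) s0 ->
   limit1_in (LP d (hpoly d n a b)) (fun s => s0 < s)
     (LP d (hpoly d n a b) s0 -
      INR (nlattice d (fun x => exists i, (i < n)%nat /\ b i < 0 /\
                                   dilate d s0 (hfacet d n a b i) x))) s0).
Proof.
  intros Hbd _ _ _ Hs0; split; intros _.
  - apply (LP_one_sided_limit d n a b s0 _ (fun bi => 0 < bi)); auto.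
    intros bi s [_ Hs]; split; [intros H Hb; nra|intros Hb; nra].
  - apply (LP_one_sided_limit d n a b s0 _ (fun bi => bi < 0)); auto.
    intros bi s Hs; split; [intros H Hb; nra|intros Hb; nra].
Qed.
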